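(* Let $w:\mathbb{Z}\to\mathbb{R}$ be a weight with $w(n)\geq 1$ for all $n$ and $\sup_{n\in\mathbb{Z}}\big(|\tfrac{w(n+1)}{w(n)}|+|\tfrac{w(n)}{w(n+1)}|\big)<\infty$. Fix $1\leq p\leq\infty$ and let $\alpha_0,\beta_0,\tilde\alpha_0,\tilde\beta_0:\mathbb{Z}\to\mathbb{C}$ be bounded sequences such that \begin{itemize} \item if $1\leq p<\infty$: $\|(\alpha_0,\beta_0)\|_{w,2p}<\infty$, $\|(\alpha_0-\alpha_0^+,\beta_0-\beta_0^+)\|_{w,p}<\infty$, and $\|(\tilde\alpha_0,\tilde\beta_0)\|_{w,p}<\infty$; \item if $p=\infty$: $\|(\alpha_0,\beta_0)\|_{w,\infty}<\infty$, $\|(\alpha_0-\alpha_0^+,\beta_0-\beta_0^+)\|_{w^2,\infty}<\infty$, and $\|(\tilde\alpha_0,\tilde\beta_0)\|_{w^2,\infty}<\infty$. \end{itemize} Let $(\alpha(t),\beta(t))$, $t\in(-T,T)$, be the unique (local, bounded) solution of the Ablowitz--Ladik system \[ -i\alpha_t-(1-\alpha\beta)(\alpha^-+\alpha^+)+2\alpha=0,\qquad -i\beta_t+(1-\alpha\beta)(\beta^-+\beta^+)-2\beta=0 \] with initial conditions $\alpha(0)=\alpha_0+\tilde\alpha_0$, $\beta(0)=\beta_0+\tilde\beta_0$. Then this solution is of the form $\alpha(t)=\alpha_0+\tilde\alpha(t)$, $\beta(t)=\beta_0+\tilde\beta(t)$, where for all $t\in(-T,T)$ one has $\|(\tilde\alpha(t),\tilde\beta(t))\|_{w,p}<\infty$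 if $1\leq p<\infty$, respectively $\|(\tilde\alpha(t),\tilde\beta(t))\|_{w^2,\infty}<\infty$ if $p=\infty$.
   Context: Here $\alpha=\alpha(n,t)$, $\beta=\beta(n,t)$, $(n,t)\in\mathbb{Z}\times\mathbb{R}$, are complex-valued, and for a sequence $f$ we write $f^\pm(n)=f(n\pm1)$ (also $f^\pm(n,t)=f(n\pm1,t)$). For a weight $v:\mathbb{Z}\to[1,\infty)$ and pairs of sequences $(\alpha,\beta)$ define \[ \|(\alpha,\beta)\|_{v,p}=\Big(\sum_{n\in\mathbb{Z}} v(n)\big(|\alpha(n)|^p+|\beta(n)|^p\big)\Big)^{1/p}\ (1\leq p<\infty),\qquad \|(\alpha,\beta)\|_{v,\infty}=\sup_{n\in\mathbb{Z}} v(n)\big(|\alpha(n)|+|\beta(n)|\big). \] $w^2$ denotes the weight $n\mapsto w(n)^2$. $T>0$ denotes the length of the existence interval of the local solution of the initial value problem (solutions are $C^1$ in $t$ with values in bounded sequences). *)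

From Stdlib Require Import Reals ZArith Lra.
From Coquelicot Require Import Coquelicot.
Open Scope R_scope.

(* |x|^q for x >= 0 and real q >= 1, with the convention 0^q = 0
   (Stdlib's Rpower 0 q would be 1). *)
Definition rpow (x q : R) : R := if Rle_dec x 0 then 0 else Rpower x q.

Definition summableZ (f : Z -> R) : Prop :=
  exists M : R, forall N : nat,
    sum_f_R0 (fun k => f (Z.of_nat k) + f (- Z.of_nat k - 1)%Z) N <= M.

Definition bounded_seq (f : Z -> C) : Prop :=
  exists M : R, forall n, Cmod (f n) <= M.

(* ||(a,b)||_{v,p} < oo, for p in [1,oo] (p : Rbar; m_infty never used). *)
Definition wnorm_finite (v : Z -> R) (p : Rbar) (a b : Z -> C) : Prop :=
  match p with
  | Finite q => summableZ (fun n => v n * (rpow (Cmod (a n)) q + rpow (Cmod (b n)) q))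
  | _ => exists M : R, forall n, v n * (Cmod (a n) + Cmod (b n)) <= M
  end.

Definition shiftp (f : Z -> C) : Z -> C := fun n => f (n + 1)%Z.
Definition shiftm (f : Z -> C) : Z -> C := fun n => f (n - 1)%Z.

(* t |-> u(.,t) is C^1 from (-T,T) into l^oo(Z), with derivative u'. *)
Definition C1_linf (T : R) (u u' : Z -> R -> C) : Prop :=
  (forall t, -T < t < T -> bounded_seq (fun n => u n t) /\ bounded_seq (fun n => u' n t)) /\
  (forall t, -T < t < T -> forall eps, 0 < eps -> exists delta, 0 < delta /\
     forall h, h <> 0 -> Rabs h < delta -> -T < t + h < T ->
       forall n, Cmod (Cminus (Cmult (RtoC (/ h)) (Cminus (u n (t + h)) (u n t))) (u' n t)) <= eps) /\
  (forall t, -T < t < T -> forall eps, 0 < eps -> exists delta, 0 < delta /\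
     forall s, Rabs (s - t) < delta -> -T < s < T ->
       forall n, Cmod (Cminus (u' n s) (u' n t)) <= eps).

Definition AL_solution (T : R) (a b : Z -> R -> C) : Prop :=
  exists a' b' : Z -> R -> C,
    C1_linf T a a' /\ C1_linf T b b' /\
    forall n t, -T < t < T ->
      Cplus (Cminus (Cmult (Copp Ci) (a' n t))
                    (Cmult (Cminus (RtoC 1) (Cmult (a n t) (b n t)))
                           (Cplus (a (n - 1)%Z t) (a (n + 1)%Z t))))
            (Cmult (RtoC 2) (a n t)) = RtoC 0 /\
      Cminus (Cplus (Cmult (Copp Ci) (b' n t))
                    (Cmult (Cminus (RtoC 1) (Cmult (a n t) (b n t)))
                           (Cplus (b (n - 1)%Z t) (b (n + 1)%Z t))))
            (Cmult (RtoC 2) (b n t)) = RtoC 0.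

From Stdlib Require Import Reals ZArith Lra Lia Classical.
From Coquelicot Require Import Coquelicot.
Open Scope R_scope.

(* Let x_n(t) = |a_n(t) - a0_n| + |b_n(t) - b0_n|.  Comparing the equation at (a, b) with
   its value at the time-independent profile (a0, b0) gives
     |x_n'| <= d_n + K (x_{n-1} + x_n + x_{n+1}),
   where d_n collects |a0_{n+-1} - a0_n|, |b0_{n+-1} - b0_n| and |a0_n b0_n| (all in the
   weighted space by the assumptions on (a0, b0)) and K depends on a sup-norm bound of the solution.  On a time
   interval of length delta the maximal increments y_n of x_n therefore satisfy
     y_n <= h_n + e (y_{n-1} + y_n + y_{n+1})
   with h in the weighted space and e = O(delta).  As neighbouring weights differ by a bounded
   factor, a bounded y with this property lies in the weighted space once e is small.  Hence
   finiteness of the weighted norm of x(t) spreads from any time to a neighbourhood, and by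
   connectedness from t = 0 to all of (-T, T).  For p = oo the weight w^2 is used, for which
   a0 b0 is bounded because w a0 and w b0 are. *)

(** * Sums over integer windows *)

Fixpoint zsum (f : Z -> R) (m : Z) (L : nat) : R :=
  match L with O => 0 | S L' => zsum f m L' + f (m + Z.of_nat L')%Z end.

Lemma zsum_ext f g m L : (forall n, f n = g n) -> zsum f m L = zsum g m L.
Proof. intros H; induction L; simpl; [lra | rewrite IHL, H; lra]. Qed.

Lemma zsum_le f g m L : (forall n, f n <= g n) -> zsum f m L <= zsum g m L.
Proof. intros H; induction L; simpl; [lra | specialize (H (m + Z.of_nat L)%Z); lra]. Qed.

Lemma zsum_ge0 f m L : (forall n, 0 <= f n) -> 0 <= zsum f m L.
Proof. intros H; induction L; simpl; [lra | specialize (H (m + Z.of_nat L)%Z); lra]. Qed.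

Lemma zsumD f g m L : zsum (fun n => f n + g n) m L = zsum f m L + zsum g m L.
Proof. induction L; simpl; [lra | rewrite IHL; lra]. Qed.

Lemma zsumZ c f m L : zsum (fun n => c * f n) m L = c * zsum f m L.
Proof. induction L; simpl; [lra | rewrite IHL; lra]. Qed.

Lemma zsumSl f m L : zsum f m (S L) = f m + zsum f (m + 1) L.
Proof.
  induction L as [|L IH]; [simpl; rewrite Z.add_0_r; lra |].
  change (zsum f m (S (S L))) with (zsum f m (S L) + f (m + Z.of_nat (S L))%Z).
  rewrite IH.
  change (zsum f (m + 1) (S L)) with (zsum f (m + 1) L + f (m + 1 + Z.of_nat L)%Z).
  replace (m + Z.of_nat (S L))%Z with (m + 1 + Z.of_nat L)%Z by lia. lra.
Qed.

Lemma zsum_shift f s m L : zsum (fun n => f (n + s)%Z) m L = zsum f (m + s) L.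
Proof.
  induction L; simpl; [lra |]. rewrite IHL.
  replace (m + Z.of_nat L + s)%Z with (m + s + Z.of_nat L)%Z by lia. lra.
Qed.

Lemma zsum_le_add_len f m L k : (forall n, 0 <= f n) -> zsum f m L <= zsum f m (L + k).
Proof.
  intros H; induction k as [|k IH]; [rewrite Nat.add_0_r; lra |].
  rewrite Nat.add_succ_r; simpl. specialize (H (m + Z.of_nat (L + k))%Z). lra.
Qed.

Definition wsum (f : Z -> R) (N : nat) : R := zsum f (- Z.of_nat N) (2 * N + 1).

Lemma wsumD f g N : wsum (fun n => f n + g n) N = wsum f N + wsum g N.
Proof. apply zsumD. Qed.

Lemma wsumZ c f N : wsum (fun n => c * f n) N = c * wsum f N.
Proof. apply zsumZ. Qed.

Lemma wsumS_zsum f N :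
  wsum f (S N) = f (- Z.of_nat N - 1)%Z + f (- Z.of_nat N)%Z + zsum f (- Z.of_nat N + 1) (2 * N + 1).
Proof.
  unfold wsum. replace (2 * S N + 1)%nat with (S (S (2 * N + 1))) by lia.
  rewrite !zsumSl. replace (- Z.of_nat (S N))%Z with (- Z.of_nat N - 1)%Z by lia.
  replace (- Z.of_nat N - 1 + 1)%Z with (- Z.of_nat N)%Z by lia. lra.
Qed.

Lemma wsumS f N : wsum f (S N) = f (- Z.of_nat N - 1)%Z + wsum f N + f (Z.of_nat N + 1)%Z.
Proof.
  rewrite wsumS_zsum. unfold wsum.
  replace (2 * N + 1)%nat with (S (2 * N)) by lia. rewrite (zsumSl f (- Z.of_nat N)).
  change (zsum f (- Z.of_nat N + 1) (S (2 * N))) with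
    (zsum f (- Z.of_nat N + 1) (2 * N) + f (- Z.of_nat N + 1 + Z.of_nat (2 * N))%Z).
  replace (- Z.of_nat N + 1 + Z.of_nat (2 * N))%Z with (Z.of_nat N + 1)%Z by lia. lra.
Qed.

Lemma wsum_le_S f N : (forall n, 0 <= f n) -> wsum f N <= wsum f (S N).
Proof.
  intros H. rewrite wsumS. pose proof (H (- Z.of_nat N - 1)%Z). pose proof (H (Z.of_nat N + 1)%Z). lra.
Qed.

Lemma wsum_shiftp_le f N : (forall n, 0 <= f n) -> wsum (fun n => f (n + 1)%Z) N <= wsum f (S N).
Proof.
  intros H. rewrite wsumS_zsum. unfold wsum. rewrite zsum_shift.
  pose proof (H (- Z.of_nat N - 1)%Z). pose proof (H (- Z.of_nat N)%Z). lra.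
Qed.

Lemma wsum_shiftm_le f N : (forall n, 0 <= f n) -> wsum (fun n => f (n - 1)%Z) N <= wsum f (S N).
Proof.
  intros H. unfold wsum.
  rewrite (zsum_ext _ (fun n => f (n + -1)%Z)) by (intros; f_equal; lia).
  rewrite zsum_shift.
  replace (- Z.of_nat (S N))%Z with (- Z.of_nat N + -1)%Z by lia.
  replace (2 * S N + 1)%nat with (2 * N + 1 + 2)%nat by lia.
  apply zsum_le_add_len; auto.
Qed.

Lemma wsum_geometric z D c : 1 <= c -> 0 <= D -> (forall n, z n <= D * c ^ Z.abs_nat n) ->
  forall N, wsum z N <= D * (3 * c) ^ N.
Proof.
  intros Hc HD Hz. induction N as [|N IH].
  - unfold wsum. simpl. specialize (Hz 0%Z). simpl in Hz. lra.
  - rewrite wsumS. pose proof (Hz (- Z.of_nat N - 1)%Z) as Hl. pose proof (Hz (Z.of_nat N + 1)%Z) as Hr.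
    replace (Z.abs_nat (- Z.of_nat N - 1)) with (S N) in Hl by lia.
    replace (Z.abs_nat (Z.of_nat N + 1)) with (S N) in Hr by lia.
    assert (1 <= 3 ^ N) by (apply pow_R1_Rle; lra).
    assert (1 <= c ^ N) by (apply pow_R1_Rle; lra).
    rewrite Rpow_mult_distr in *. simpl in *.
    set (a := 3 ^ N) in *. set (b := c ^ N) in *.
    assert (0 <= D * a * b) by (apply Rmult_le_pos; [apply Rmult_le_pos|]; lra).
    assert (0 <= D * c * b) by (apply Rmult_le_pos; [apply Rmult_le_pos|]; lra).
    assert (D * a * b <= D * a * b * c) by (apply Rle_trans with (D * a * b * 1); [lra | apply Rmult_le_compat_l; lra]).
    assert (D * c * b <= D * c * b * a) by (apply Rle_trans with (D * c * b * 1); [lra | apply Rmult_le_compat_l; lra]).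
    nra.
Qed.

Lemma sum_f_R0_zsum f N :
  sum_f_R0 (fun k => f (Z.of_nat k) + f (- Z.of_nat k - 1)%Z) N = zsum f (- Z.of_nat N - 1) (2 * N + 2).
Proof.
  induction N as [|N IH]; [simpl; lra |].
  rewrite tech5, IH. replace (2 * S N + 2)%nat with (S (S (2 * N + 2))) by lia.
  rewrite zsumSl. replace (- Z.of_nat (S N) - 1 + 1)%Z with (- Z.of_nat N - 1)%Z by lia.
  change (zsum f (- Z.of_nat N - 1) (S (2 * N + 2))) with
    (zsum f (- Z.of_nat N - 1) (2 * N + 2) + f (- Z.of_nat N - 1 + Z.of_nat (2 * N + 2))%Z).
  replace (- Z.of_nat N - 1 + Z.of_nat (2 * N + 2))%Z with (Z.of_nat (S N)) by lia. lra.
Qed.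

Lemma summableZ_wsum f : (forall n, 0 <= f n) ->
  summableZ f <-> exists M, forall N, wsum f N <= M.
Proof.
  intros H; split; intros [M HM]; exists M; intros N.
  - specialize (HM N). rewrite sum_f_R0_zsum in HM. unfold wsum.
    replace (2 * N + 2)%nat with (S (2 * N + 1)) in HM by lia.
    rewrite zsumSl in HM. replace (- Z.of_nat N - 1 + 1)%Z with (- Z.of_nat N)%Z in HM by lia.
    pose proof (H (- Z.of_nat N - 1)%Z). lra.
  - specialize (HM (S N)). rewrite sum_f_R0_zsum. unfold wsum in HM.
    replace (- Z.of_nat (S N))%Z with (- Z.of_nat N - 1)%Z in HM by lia.
    replace (2 * S N + 1)%nat with (2 * N + 2 + 1)%nat in HM by lia.
    pose proof (zsum_le_add_len f (- Z.of_nat N - 1) (2 * N + 2) 1 H). lra.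
Qed.

Lemma wsum_three_point_le z g k c N : (forall n, 0 <= z n) -> 0 <= k -> 0 <= c ->
  (forall n, z n <= g n + k * (c * z (n - 1)%Z + z n + c * z (n + 1)%Z)) ->
  wsum z N <= wsum g N + k * (2 * c + 1) * wsum z (S N).
Proof.
  intros Hz Hk Hc Hpt.
  apply (Rle_trans _ (wsum (fun n => g n + k * (c * z (n - 1)%Z + z n + c * z (n + 1)%Z)) N)); [apply zsum_le, Hpt |].
  rewrite wsumD, wsumZ, !wsumD, !wsumZ.
  pose proof (wsum_shiftm_le z N Hz). pose proof (wsum_shiftp_le z N Hz). pose proof (wsum_le_S z N Hz).
  assert (k * (c * wsum (fun n => z (n - 1)%Z) N + wsum z N + c * wsum (fun n => z (n + 1)%Z) N)
          <= k * (c * wsum z (S N) + wsum z (S N) + c * wsum z (S N))) by (apply Rmult_le_compat_l; nra).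
  nra.
Qed.

Lemma rpow_Rpower x q : 0 < x -> rpow x q = Rpower x q.
Proof. intros H; unfold rpow; destruct (Rle_dec x 0); [lra | auto]. Qed.

Lemma rpow_le0 x q : x <= 0 -> rpow x q = 0.
Proof. intros H; unfold rpow; destruct (Rle_dec x 0); [auto | lra]. Qed.

Lemma rpow_ge0 x q : 0 <= rpow x q.
Proof. unfold rpow; destruct (Rle_dec x 0); [lra | left; apply exp_pos]. Qed.

Lemma rpow_le_compat x y q : 0 <= q -> 0 <= x <= y -> rpow x q <= rpow y q.
Proof.
  intros Hq [H1 H2]. destruct (Req_dec x 0) as [->|Hx].
  - rewrite rpow_le0 by lra. apply rpow_ge0.
  - rewrite !rpow_Rpower by lra. apply Rle_Rpower_l; lra.
Qed.

Lemma rpow_mult_distr x y q : 0 <= x -> 0 <= y -> rpow (x * y) q = rpow x q * rpow y q.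
Proof.
  intros Hx Hy. destruct (Req_dec x 0) as [->|Hx'].
  { rewrite Rmult_0_l, rpow_le0 by lra. lra. }
  destruct (Req_dec y 0) as [->|Hy'].
  { rewrite Rmult_0_r, (rpow_le0 0) by lra. lra. }
  rewrite !rpow_Rpower by (try apply Rmult_lt_0_compat; lra).
  symmetry; apply Rpower_mult_distr; lra.
Qed.

Lemma rpow_sqr x q : 0 <= x -> rpow (x * x) q = rpow x (2 * q).
Proof.
  intros Hx. rewrite rpow_mult_distr by auto. destruct (Req_dec x 0) as [->|H].
  - rewrite !rpow_le0 by lra. lra.
  - rewrite !rpow_Rpower by lra. replace (2 * q) with (q + q) by lra. rewrite Rpower_plus. auto.
Qed.

Lemma one_le_rpow2 q : 0 <= q -> 1 <= rpow 2 q.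
Proof.
  intros Hq. rewrite rpow_Rpower by lra. rewrite <- (Rpower_O 2) at 1 by lra.
  apply Rle_Rpower; lra.
Qed.

Lemma rpow_le_base e q : 0 <= e <= 1 -> 1 <= q -> rpow e q <= e.
Proof.
  intros He Hq. destruct (Req_dec e 0) as [->|H].
  - rewrite rpow_le0 by lra. lra.
  - rewrite rpow_Rpower by lra. replace q with (1 + (q - 1)) by lra.
    rewrite Rpower_plus, Rpower_1 by lra.
    assert (Rpower e (q - 1) <= Rpower 1 (q - 1)) by (apply Rle_Rpower_l; lra).
    unfold Rpower at 2 in H0. rewrite ln_1, Rmult_0_r, exp_0 in H0.
    assert (0 < Rpower e (q - 1)) by apply exp_pos. nra.
Qed.

Lemma rpow_add_le x y q : 0 <= q -> 0 <= x -> 0 <= y ->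
  rpow (x + y) q <= rpow 2 q * (rpow x q + rpow y q).
Proof.
  intros Hq Hx Hy. pose proof (Rmax_l x y). pose proof (Rmax_r x y).
  assert (H1 : rpow (x + y) q <= rpow (2 * Rmax x y) q) by (apply rpow_le_compat; lra).
  rewrite rpow_mult_distr in H1 by lra.
  assert (H2 : rpow (Rmax x y) q <= rpow x q + rpow y q).
  { unfold Rmax; destruct (Rle_dec x y); pose proof (rpow_ge0 x q); pose proof (rpow_ge0 y q); lra. }
  pose proof (rpow_ge0 2 q). nra.
Qed.

Lemma rpow_add4_le a b1 b2 b3 q : 0 <= q -> 0 <= a -> 0 <= b1 -> 0 <= b2 -> 0 <= b3 ->
  rpow (a + (b1 + (b2 + b3))) q <=
  rpow 2 q * rpow 2 q * rpow 2 q * (rpow a q + (rpow b1 q + rpow b2 q + rpow b3 q)).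
Proof.
  intros Hq Ha H1 H2 H3. set (C := rpow 2 q).
  assert (HC : 1 <= C) by (apply one_le_rpow2; auto).
  pose proof (rpow_add_le a (b1 + (b2 + b3)) q Hq Ha ltac:(lra)) as E1.
  pose proof (rpow_add_le b1 (b2 + b3) q Hq H1 ltac:(lra)) as E2.
  pose proof (rpow_add_le b2 b3 q Hq H2 H3) as E3.
  fold C in E1, E2, E3.
  pose proof (rpow_ge0 a q). pose proof (rpow_ge0 b1 q). pose proof (rpow_ge0 b2 q).
  pose proof (rpow_ge0 b3 q). pose proof (rpow_ge0 (b2 + b3) q).
  assert (C * rpow (b2 + b3) q <= C * (C * (rpow b2 q + rpow b3 q))) by (apply Rmult_le_compat_l; lra).
  assert (0 <= (C - 1) * (C * rpow b1 q)) by (apply Rmult_le_pos; nra).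
  assert (E23 : rpow (b1 + (b2 + b3)) q <= C * C * (rpow b1 q + rpow b2 q + rpow b3 q)) by nra.
  assert (C * rpow (b1 + (b2 + b3)) q <= C * (C * C * (rpow b1 q + rpow b2 q + rpow b3 q)))
    by (apply Rmult_le_compat_l; lra).
  assert (C * rpow a q <= C * C * C * rpow a q).
  { assert (0 <= (C * C - 1) * (C * rpow a q)) by (apply Rmult_le_pos; nra). nra. }
  nra.
Qed.

(** * Weighted sequence spaces *)

Definition moderate_weight (v : Z -> R) (c : R) : Prop :=
  (forall n, 0 < v n) /\ 1 <= c /\
  (forall n, v (n + 1)%Z <= c * v n) /\ (forall n, v n <= c * v (n + 1)%Z).

(* Up to constants, [wnorm_finite v p a b] is [wfinite v p (fun n => |a n| + |b n|)]. *)
Definition wfinite (v : Z -> R) (p : Rbar) (f : Z -> R) : Prop :=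
  match p with
  | Finite q => exists M, forall N, wsum (fun n => v n * rpow (f n) q) N <= M
  | _ => exists M, forall n, v n * f n <= M
  end.

Section WeightedSequences.

Variables (v : Z -> R) (p : Rbar).
Hypotheses (Hv : forall n, 0 <= v n) (Hp : Rbar_le 1 p).

Lemma wfinite_ext f g : (forall n, f n = g n) -> wfinite v p g -> wfinite v p f.
Proof.
  intros Hfg. destruct p as [q| |]; simpl; intros [M HM]; exists M; intros n.
  - unfold wsum. erewrite zsum_ext; [apply HM|]. intros m. rewrite Hfg. auto.
  - rewrite Hfg. auto.
  - rewrite Hfg. auto.
Qed.

Lemma wfinite_le f g : (forall n, 0 <= f n <= g n) -> wfinite v p g -> wfinite v p f.
Proof.
  intros Hfg. destruct p as [q| |]; simpl in *; intros [M HM]; exists M; intros n;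
    (eapply Rle_trans; [|apply HM]).
  - apply zsum_le. intros m. apply Rmult_le_compat_l; auto. apply rpow_le_compat; [lra | apply Hfg].
  - apply Rmult_le_compat_l; auto. apply Hfg.
  - apply Rmult_le_compat_l; auto. apply Hfg.
Qed.

Lemma wfiniteD f g : (forall n, 0 <= f n) -> (forall n, 0 <= g n) ->
  wfinite v p f -> wfinite v p g -> wfinite v p (fun n => f n + g n).
Proof.
  intros Hf Hg. destruct p as [q| |]; simpl in *; intros [M1 H1] [M2 H2]; [| |destruct Hp].
  - exists (rpow 2 q * M1 + rpow 2 q * M2). intros N.
    eapply Rle_trans.
    { apply (zsum_le _ (fun n => rpow 2 q * (v n * rpow (f n) q) + rpow 2 q * (v n * rpow (g n) q))).
      intros n. pose proof (rpow_add_le (f n) (g n) q ltac:(lra) (Hf n) (Hg n)).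
      pose proof (Hv n). nra. }
    fold (wsum (fun n => rpow 2 q * (v n * rpow (f n) q) + rpow 2 q * (v n * rpow (g n) q)) N).
    rewrite wsumD, !wsumZ. specialize (H1 N); specialize (H2 N). pose proof (rpow_ge0 2 q). nra.
  - exists (M1 + M2). intros n. specialize (H1 n); specialize (H2 n). nra.
Qed.

Lemma wfiniteZ c f : 0 <= c -> (forall n, 0 <= f n) ->
  wfinite v p f -> wfinite v p (fun n => c * f n).
Proof.
  intros Hc Hf. destruct p as [q| |]; simpl in *; intros [M H]; [| |destruct Hp].
  - exists (rpow c q * M). intros N.
    unfold wsum. rewrite (zsum_ext _ (fun n => rpow c q * (v n * rpow (f n) q))).
    + rewrite zsumZ. specialize (H N). pose proof (rpow_ge0 c q). unfold wsum in H. nra.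
    + intros n. rewrite rpow_mult_distr by auto. ring.
  - exists (c * M). intros n. specialize (H n). nra.
Qed.

End WeightedSequences.

Section ModerateWeight.

Variables (v : Z -> R) (c : R) (p : Rbar).
Hypotheses (Hw : moderate_weight v c) (Hp : Rbar_le 1 p).

Lemma moderate_weight_pred n : v n <= c * v (n - 1)%Z.
Proof.
  destruct Hw as (_ & _ & H & _). specialize (H (n - 1)%Z).
  replace (n - 1 + 1)%Z with n in H by lia. auto.
Qed.

Lemma moderate_weight_growth n : v n <= v 0%Z * c ^ Z.abs_nat n.
Proof.
  destruct Hw as (Hv & Hc & H1 & H2).
  assert (Hpos : forall k, v (Z.of_nat k) <= v 0%Z * c ^ k).
  { induction k; [simpl; lra|]. rewrite Nat2Z.inj_succ. unfold Z.succ.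
    change (c ^ S k) with (c * c ^ k). specialize (H1 (Z.of_nat k)). specialize (Hv (Z.of_nat k)). nra. }
  assert (Hneg : forall k, v (- Z.of_nat k)%Z <= v 0%Z * c ^ k).
  { induction k; [simpl; lra|]. change (c ^ S k) with (c * c ^ k).
    specialize (H2 (- Z.of_nat (S k))%Z).
    replace (- Z.of_nat (S k) + 1)%Z with (- Z.of_nat k)%Z in H2 by lia. nra. }
  destruct (Z_le_gt_dec 0 n).
  - replace n with (Z.of_nat (Z.abs_nat n)) at 1 by lia. apply Hpos.
  - replace n with (- Z.of_nat (Z.abs_nat n))%Z at 1 by lia. apply Hneg.
Qed.

Lemma wfinite_shiftp f : (forall n, 0 <= f n) -> wfinite v p f -> wfinite v p (fun n => f (n + 1)%Z).
Proof.
  pose proof Hw as (Hv & Hc & _ & H2). intros Hf.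
  destruct p as [q| |]; simpl in *; intros [M H]; [| |destruct Hp].
  - exists (c * M). intros N.
    eapply Rle_trans.
    { apply (zsum_le _ (fun n => c * (v (n + 1)%Z * rpow (f (n + 1)%Z) q))).
      intros n. pose proof (rpow_ge0 (f (n + 1)%Z) q). specialize (H2 n). nra. }
    fold (wsum (fun n => c * (v (n + 1)%Z * rpow (f (n + 1)%Z) q)) N). rewrite wsumZ.
    pose proof (wsum_shiftp_le (fun n => v n * rpow (f n) q) N) as HS.
    specialize (HS (fun n => Rmult_le_pos _ _ (Rlt_le _ _ (Hv n)) (rpow_ge0 _ _))).
    specialize (H (S N)). nra.
  - exists (c * M). intros n. specialize (H (n + 1)%Z). specialize (H2 n). pose proof (Hf (n + 1)%Z). nra.
Qed.

Lemma wfinite_shiftm f : (forall n, 0 <= f n) -> wfinite v p f -> wfinite v p (fun n => f (n - 1)%Z).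
Proof.
  pose proof Hw as (Hv & Hc & _ & _). pose proof moderate_weight_pred as H1. intros Hf.
  destruct p as [q| |]; simpl in *; intros [M H]; [| |destruct Hp].
  - exists (c * M). intros N.
    eapply Rle_trans.
    { apply (zsum_le _ (fun n => c * (v (n - 1)%Z * rpow (f (n - 1)%Z) q))).
      intros n. pose proof (rpow_ge0 (f (n - 1)%Z) q). specialize (H1 n). nra. }
    fold (wsum (fun n => c * (v (n - 1)%Z * rpow (f (n - 1)%Z) q)) N). rewrite wsumZ.
    pose proof (wsum_shiftm_le (fun n => v n * rpow (f n) q) N) as HS.
    specialize (HS (fun n => Rmult_le_pos _ _ (Rlt_le _ _ (Hv n)) (rpow_ge0 _ _))).
    specialize (H (S N)). nra.
  - exists (c * M). intros n. specialize (H (n - 1)%Z). specialize (H1 n). pose proof (Hf (n - 1)%Z). nra.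
Qed.

Lemma wfinite_three_point_sum f : (forall n, 0 <= f n) -> wfinite v p f ->
  wfinite v p (fun n => f (n - 1)%Z + f n + f (n + 1)%Z).
Proof.
  pose proof Hw as (Hv & _). assert (Hv' : forall n, 0 <= v n) by (intros n; left; auto).
  intros Hf Hfin. apply (wfiniteD v p Hv' Hp (fun n => f (n - 1)%Z + f n)).
  - intros n. pose proof (Hf n). pose proof (Hf (n - 1)%Z). lra.
  - intros n. apply Hf.
  - apply (wfiniteD v p Hv' Hp); auto. apply wfinite_shiftm; auto.
  - apply wfinite_shiftp; auto.
Qed.

End ModerateWeight.

Lemma moderate_weight_of_ratio_bound w : (forall n, 1 <= w n) ->
  (exists M, forall n, Rabs (w (n + 1)%Z / w n) + Rabs (w n / w (n + 1)%Z) <= M) ->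
  exists c, moderate_weight w c.
Proof.
  intros H1 [M HM]. exists (Rmax M 1). pose proof (Rmax_l M 1). pose proof (Rmax_r M 1).
  split; [intros n; specialize (H1 n); lra|]. split; [lra|]. split; intros n; specialize (HM n).
  - pose proof (Rabs_pos (w n / w (n + 1)%Z)). pose proof (Rle_abs (w (n + 1)%Z / w n)). pose proof (H1 n).
    replace (w (n + 1)%Z) with (w (n + 1)%Z / w n * w n) at 1 by (field; lra). nra.
  - pose proof (Rabs_pos (w (n + 1)%Z / w n)). pose proof (Rle_abs (w n / w (n + 1)%Z)). pose proof (H1 (n + 1)%Z).
    replace (w n) with (w n / w (n + 1)%Z * w (n + 1)%Z) at 1 by (field; lra). nra.
Qed.

Lemma moderate_weight_sqr w c : moderate_weight w c -> moderate_weight (fun n => w n ^ 2) (c ^ 2).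
Proof.
  intros (Hv & Hc & H1 & H2). split; [intros n; specialize (Hv n); nra|]. split; [nra|].
  split; intros n; [specialize (H1 n) | specialize (H2 n)]; pose proof (Hv n); pose proof (Hv (n + 1)%Z).
  - assert (w (n + 1)%Z * w (n + 1)%Z <= c * w n * (c * w n)) by (apply Rmult_le_compat; lra). nra.
  - assert (w n * w n <= c * w (n + 1)%Z * (c * w (n + 1)%Z)) by (apply Rmult_le_compat; lra). nra.
Qed.

Lemma wfinite_of_wnorm_finite v p a b : (forall n, 0 <= v n) -> Rbar_le 1 p ->
  wnorm_finite v p a b -> wfinite v p (fun n => Cmod (a n)) /\ wfinite v p (fun n => Cmod (b n)).
Proof.
  intros Hv Hp. destruct p as [q| |]; simpl in *; [|intros [M HM] | destruct Hp].
  - intros H. apply summableZ_wsum in H.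
    2:{ intros n. pose proof (rpow_ge0 (Cmod (a n)) q). pose proof (rpow_ge0 (Cmod (b n)) q).
        apply Rmult_le_pos; auto; lra. }
    destruct H as [M HM]. split; exists M; intros N; (eapply Rle_trans; [|apply (HM N)]);
      apply zsum_le; intros n; pose proof (rpow_ge0 (Cmod (a n)) q);
      pose proof (rpow_ge0 (Cmod (b n)) q); specialize (Hv n); nra.
  - split; exists M; intros n; specialize (HM n); specialize (Hv n);
      pose proof (Cmod_ge_0 (a n)); pose proof (Cmod_ge_0 (b n)); nra.
Qed.

Lemma wnorm_finite_of_wfinite v p a b : (forall n, 0 <= v n) -> Rbar_le 1 p ->
  wfinite v p (fun n => Cmod (a n) + Cmod (b n)) -> wnorm_finite v p a b.
Proof.
  intros Hv Hp. destruct p as [q| |]; simpl in *; intros [M HM]; [|exists M; auto | destruct Hp].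
  apply summableZ_wsum.
  { intros n. pose proof (rpow_ge0 (Cmod (a n)) q). pose proof (rpow_ge0 (Cmod (b n)) q).
    apply Rmult_le_pos; auto; lra. }
  exists (2 * M). intros N. eapply Rle_trans.
  { apply (zsum_le _ (fun n => 2 * (v n * rpow (Cmod (a n) + Cmod (b n)) q))). intros n.
    pose proof (Cmod_ge_0 (a n)). pose proof (Cmod_ge_0 (b n)).
    assert (rpow (Cmod (a n)) q <= rpow (Cmod (a n) + Cmod (b n)) q) by (apply rpow_le_compat; lra).
    assert (rpow (Cmod (b n)) q <= rpow (Cmod (a n) + Cmod (b n)) q) by (apply rpow_le_compat; lra).
    specialize (Hv n). nra. }
  rewrite zsumZ. specialize (HM N). unfold wsum in HM. lra.
Qed.

(** * Absorbing three-point inequalities *)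

Lemma le_of_le_geometric x a b : 0 <= b -> (forall k, x <= a + b * (/ 2) ^ k) -> x <= a.
Proof.
  intros Hb H. destruct (Rle_dec x a) as [|Hn]; auto. exfalso.
  destruct (Req_dec b 0) as [->|Hb0]; [specialize (H O); lra |].
  destruct (pow_lt_1_zero (/ 2) ltac:(rewrite Rabs_pos_eq; lra) ((x - a) / b)) as [N HN].
  { apply Rdiv_lt_0_compat; lra. }
  specialize (HN N (Nat.le_refl _)). specialize (H N).
  rewrite Rabs_pos_eq in HN by (apply pow_le; lra).
  apply (Rmult_lt_compat_l b) in HN; [|lra].
  replace (b * ((x - a) / b)) with (x - a) in HN by (field; lra). lra.
Qed.

(* Iterating F N <= A + mu F (N+1) k times leaves mu^k F (N+k) <= D (mu r)^k r^N,
   which vanishes as k grows. *)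
Lemma recursion_bound_nat (F : nat -> R) A mu D r :
  0 <= A -> 0 <= mu <= / 2 -> 0 <= r -> mu * r <= / 2 -> 0 <= D ->
  (forall N, F N <= A + mu * F (S N)) -> (forall N, F N <= D * r ^ N) ->
  forall N, F N <= 2 * A.
Proof.
  intros HA Hm Hr Hmr HD Hrec Hg.
  assert (Hk : forall k N, F N <= 2 * A + mu ^ k * F (N + k)%nat).
  { induction k as [|k IH]; intros N; [simpl; rewrite Nat.add_0_r; lra |].
    specialize (IH (S N)). specialize (Hrec N).
    replace (N + S k)%nat with (S N + k)%nat by lia. simpl.
    assert (mu * F (S N) <= mu * (2 * A + mu ^ k * F (S N + k)%nat)) by (apply Rmult_le_compat_l; lra).
    assert (mu * A <= / 2 * A) by (apply Rmult_le_compat_r; lra).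
    change (S N + k)%nat with (S (N + k)) in *. rewrite Rmult_assoc. nra. }
  intros N. apply (le_of_le_geometric _ _ (D * r ^ N)).
  { apply Rmult_le_pos; auto. apply pow_le; auto. }
  intros k. specialize (Hk k N). specialize (Hg (N + k)%nat).
  assert (mu ^ k * F (N + k)%nat <= mu ^ k * (D * r ^ (N + k))) by (apply Rmult_le_compat_l; [apply pow_le; lra|]; auto).
  assert ((mu * r) ^ k <= (/ 2) ^ k) by (apply pow_incr; nra).
  rewrite pow_add in H. rewrite Rpow_mult_distr in H0.
  assert (0 <= D * r ^ N) by (apply Rmult_le_pos; auto; apply pow_le; auto).
  nra.
Qed.

Lemma recursion_bound_Z (z : Z -> R) A e c D :
  0 <= A -> 0 <= e -> 1 <= c -> e * (2 * c + 1) * c <= / 2 -> 0 <= D ->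
  (forall n, z n <= A + e * (c * z (n - 1)%Z + z n + c * z (n + 1)%Z)) ->
  (forall n, z n <= D * c ^ Z.abs_nat n) ->
  forall n, z n <= 2 * A.
Proof.
  intros HA He Hc Hec HD Hrec Hg. set (mu := e * (2 * c + 1)) in *.
  assert (Hmu : 0 <= mu) by (unfold mu; nra).
  assert (Hk : forall k n, z n <= 2 * A + mu ^ k * (D * c ^ (Z.abs_nat n + k))).
  { induction k as [|k IH]; intros n; [simpl; rewrite Nat.add_0_r; specialize (Hg n); lra |].
    set (E := mu ^ k * (D * c ^ (Z.abs_nat n + S k))).
    assert (HE : 0 <= E) by (apply Rmult_le_pos; [apply pow_le | apply Rmult_le_pos; [| apply pow_le]]; lra).
    assert (Hnear : forall m, (Z.abs_nat m <= S (Z.abs_nat n))%nat -> z m <= 2 * A + E).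
    { intros m Hm'. eapply Rle_trans; [apply IH|]. apply Rplus_le_compat_l.
      apply Rmult_le_compat_l; [apply pow_le; auto|].
      apply Rmult_le_compat_l; auto. apply Rle_pow; auto. lia. }
    pose proof (Hnear (n - 1)%Z ltac:(lia)). pose proof (Hnear n ltac:(lia)). pose proof (Hnear (n + 1)%Z ltac:(lia)).
    specialize (Hrec n).
    assert (e * (c * z (n - 1)%Z + z n + c * z (n + 1)%Z) <= e * (c * (2 * A + E) + (2 * A + E) + c * (2 * A + E)))
      by (apply Rmult_le_compat_l; nra).
    replace (mu ^ S k * (D * c ^ (Z.abs_nat n + S k))) with (mu * E) by (unfold E; simpl; ring).
    unfold mu in *. nra. }
  intros n. apply (le_of_le_geometric _ _ (D * c ^ Z.abs_nat n)).
  { apply Rmult_le_pos; auto. apply pow_le; lra. }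
  intros k. specialize (Hk k n).
  assert ((mu * c) ^ k <= (/ 2) ^ k) by (apply pow_incr; unfold mu in *; split; nra).
  rewrite pow_add in Hk. rewrite Rpow_mult_distr in H.
  assert (0 <= D * c ^ Z.abs_nat n) by (apply Rmult_le_pos; auto; apply pow_le; lra).
  nra.
Qed.

Definition three_point_le (e : R) (y h : Z -> R) : Prop :=
  forall n, y n <= h n + e * (y (n - 1)%Z + y n + y (n + 1)%Z).

Definition absorbs_three_point (v : Z -> R) (p : Rbar) (e0 : R) : Prop :=
  forall e y h, 0 <= e <= e0 ->
    (forall n, 0 <= y n) -> (forall n, 0 <= h n) -> (exists Y, forall n, y n <= Y) ->
    wfinite v p h -> three_point_le e y h -> wfinite v p y.

Section ThreePoint.

Variables (v : Z -> R) (c : R).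
Hypothesis Hw : moderate_weight v c.

Lemma rpow_three_point_le q e y h n : 1 <= q -> 0 <= e ->
  (forall m, 0 <= y m) -> (forall m, 0 <= h m) -> three_point_le e y h ->
  let z m := v m * rpow (y m) q in
  let K := rpow 2 q * rpow 2 q * rpow 2 q in
  z n <= K * (v n * rpow (h n) q) + K * rpow e q * (c * z (n - 1)%Z + z n + c * z (n + 1)%Z).
Proof.
  intros Hq He Hy Hh Hrec z K.
  pose proof Hw as (Hv & _ & _ & Hvs). pose proof (moderate_weight_pred v c Hw n) as Hvp.
  assert (HK : 1 <= K) by (pose proof (one_le_rpow2 q ltac:(lra)); unfold K; nra).
  assert (Hyn : rpow (y n) q <=
      K * (rpow (h n) q + rpow e q * (rpow (y (n - 1)%Z) q + rpow (y n) q + rpow (y (n + 1)%Z) q))).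
  { eapply Rle_trans.
    { apply (rpow_le_compat _ (h n + (e * y (n - 1)%Z + (e * y n + e * y (n + 1)%Z)))); [lra|].
      split; auto. specialize (Hrec n). lra. }
    eapply Rle_trans; [apply rpow_add4_le; try apply Rmult_le_pos; auto; lra|].
    rewrite !rpow_mult_distr by auto. right; unfold K; ring. }
  specialize (Hvs n). pose proof (Hv n).
  pose proof (rpow_ge0 (y (n - 1)%Z) q). pose proof (rpow_ge0 (y (n + 1)%Z) q).
  pose proof (rpow_ge0 (y n) q). pose proof (rpow_ge0 (h n) q). pose proof (rpow_ge0 e q).
  assert (0 <= K * rpow e q) by nra.
  assert (v n * rpow (y n) q <= v n * (K * (rpow (h n) q + rpow e q *
            (rpow (y (n - 1)%Z) q + rpow (y n) q + rpow (y (n + 1)%Z) q)))) by (apply Rmult_le_compat_l; lra).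
  assert (K * rpow e q * (v n * rpow (y (n - 1)%Z) q) <= K * rpow e q * (c * v (n - 1)%Z * rpow (y (n - 1)%Z) q))
    by (apply Rmult_le_compat_l; nra).
  assert (K * rpow e q * (v n * rpow (y (n + 1)%Z) q) <= K * rpow e q * (c * v (n + 1)%Z * rpow (y (n + 1)%Z) q))
    by (apply Rmult_le_compat_l; nra).
  unfold z. nra.
Qed.

(* For z_n = v_n y_n^q the window sums S_N satisfy S_N <= K |h| + mu S_(N+1), while the
   bound on y gives S_N <= D (3c)^N; [recursion_bound_nat] then bounds S_N uniformly. *)
Lemma absorbs_three_point_fin q : 1 <= q -> exists e0, 0 < e0 /\ absorbs_three_point v (Finite q) e0.
Proof.
  intros Hq. pose proof Hw as (Hv & Hc & _ & _).
  set (K := rpow 2 q * rpow 2 q * rpow 2 q).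
  assert (HK : 1 <= K) by (pose proof (one_le_rpow2 q ltac:(lra)); unfold K; nra).
  assert (Hprod : 0 < K * (2 * c + 1) * (6 * c)) by (apply Rmult_lt_0_compat; [apply Rmult_lt_0_compat|]; lra).
  exists (/ (K * (2 * c + 1) * (6 * c))). split; [apply Rinv_0_lt_compat; lra|].
  intros e y h He Hy Hh [Y HY] [Mh HMh] Hrec. simpl.
  assert (Hee : e * (K * (2 * c + 1) * (6 * c)) <= 1).
  { destruct He as [_ He]. apply (Rmult_le_compat_r (K * (2 * c + 1) * (6 * c))) in He; [|lra].
    rewrite Rinv_l in He; lra. }
  assert (Hre : 0 <= rpow e q <= e) by (split; [apply rpow_ge0 | apply rpow_le_base; nra]).
  set (z := fun n => v n * rpow (y n) q).
  assert (Hz0 : forall n, 0 <= z n) by (intros n; apply Rmult_le_pos; [left; auto | apply rpow_ge0]).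
  set (mu := K * rpow e q * (2 * c + 1)).
  assert (Hmu : mu * (6 * c) <= 1).
  { assert (mu * (6 * c) <= K * e * (2 * c + 1) * (6 * c)).
    { unfold mu. repeat apply Rmult_le_compat_r; lra || nra. }
    nra. }
  assert (HMh0 : 0 <= Mh).
  { eapply Rle_trans; [|apply (HMh O)]. apply zsum_ge0. intros n. apply Rmult_le_pos; [left; auto | apply rpow_ge0]. }
  assert (HD : 0 <= v 0%Z * rpow Y q) by (pose proof (Hv 0%Z); pose proof (rpow_ge0 Y q); nra).
  exists (2 * (K * Mh)).
  apply (recursion_bound_nat (wsum z) (K * Mh) mu (v 0%Z * rpow Y q) (3 * c)); try nra.
  - unfold mu; split; nra.
  - intros N. specialize (HMh N).
    assert (0 <= K * rpow e q) by nra.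
    eapply Rle_trans; [apply (wsum_three_point_le z (fun n => K * (v n * rpow (h n) q)) (K * rpow e q) c N); auto; try lra |].
    + intros n. apply rpow_three_point_le; auto; lra.
    + rewrite wsumZ. unfold mu. nra.
  - apply wsum_geometric; [lra | auto |].
    intros n. pose proof (moderate_weight_growth v c Hw n).
    assert (rpow (y n) q <= rpow Y q) by (apply rpow_le_compat; [lra | auto]).
    pose proof (rpow_ge0 (y n) q). pose proof (Hv n). pose proof (pow_le c (Z.abs_nat n) ltac:(lra)).
    assert (v n * rpow (y n) q <= v 0%Z * c ^ Z.abs_nat n * rpow Y q) by (apply Rmult_le_compat; lra).
    unfold z. nra.
Qed.

Lemma absorbs_three_point_inf : exists e0, 0 < e0 /\ absorbs_three_point v p_infty e0.
Proof.
  pose proof Hw as (Hv & Hc & _ & Hvs).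
  exists (/ ((2 * c + 1) * (2 * c))). split; [apply Rinv_0_lt_compat, Rmult_lt_0_compat; lra|].
  intros e y h He Hy Hh [Y HY] [Mh HMh] Hrec. simpl.
  assert (Hee : e * ((2 * c + 1) * (2 * c)) <= 1).
  { destruct He as [_ He]. apply (Rmult_le_compat_r ((2 * c + 1) * (2 * c))) in He; [|nra].
    rewrite Rinv_l in He; nra. }
  assert (HMh0 : 0 <= Mh) by (specialize (HMh 0%Z); specialize (Hv 0%Z); specialize (Hh 0%Z); nra).
  exists (2 * Mh). intros n.
  apply (recursion_bound_Z (fun n => v n * y n) Mh e c (v 0%Z * Y)); try nra.
  - specialize (HY 0%Z); specialize (Hy 0%Z); pose proof (Hv 0%Z); nra.
  - intros m. specialize (Hrec m). specialize (HMh m). specialize (Hvs m).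
    pose proof (moderate_weight_pred v c Hw m). pose proof (Hv m).
    pose proof (Hy (m - 1)%Z). pose proof (Hy (m + 1)%Z). pose proof (Hy m).
    assert (v m * y m <= v m * (h m + e * (y (m - 1)%Z + y m + y (m + 1)%Z))) by (apply Rmult_le_compat_l; lra).
    assert (e * (v m * y (m - 1)%Z) <= e * (c * v (m - 1)%Z * y (m - 1)%Z)) by (apply Rmult_le_compat_l; nra).
    assert (e * (v m * y (m + 1)%Z) <= e * (c * v (m + 1)%Z * y (m + 1)%Z)) by (apply Rmult_le_compat_l; nra).
    nra.
  - intros m. pose proof (moderate_weight_growth v c Hw m). pose proof (Hv m). pose proof (Hy m). specialize (HY m).
    pose proof (pow_le c (Z.abs_nat m) ltac:(lra)).
    assert (v m * y m <= v 0%Z * c ^ Z.abs_nat m * Y) by (apply Rmult_le_compat; lra). nra.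
Qed.

Lemma absorbs_three_point_exists p : Rbar_le 1 p -> exists e0, 0 < e0 /\ absorbs_three_point v p e0.
Proof.
  destruct p as [q| |]; intros Hp; [| |destruct Hp].
  - apply absorbs_three_point_fin, Hp.
  - apply absorbs_three_point_inf.
Qed.

End ThreePoint.

Definition derivative_on (T : R) (u u' : R -> C) : Prop :=
  forall t, -T < t < T -> forall eps, 0 < eps -> exists delta, 0 < delta /\
    forall h, h <> 0 -> Rabs h < delta -> -T < t + h < T ->
      Cmod (Cminus (Cmult (RtoC (/ h)) (Cminus (u (t + h)) (u t))) (u' t)) <= eps.

Lemma C1_linf_derivative_on T u u' n : C1_linf T u u' -> derivative_on T (u n) (u' n).
Proof.
  intros [_ [H _]] t Ht eps He. destruct (H t Ht eps He) as [d [Hd Hh]]. exists d; auto.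
Qed.

Lemma derivable_pt_lim_comp_linear T u u' t (g : C -> R) :
  (forall x y, g (Cplus x y) = g x + g y) -> (forall r x, g (Cmult (RtoC r) x) = r * g x) ->
  (forall x, g (Copp x) = - g x) -> (forall z, Rabs (g z) <= Cmod z) ->
  derivative_on T u u' -> -T < t < T -> derivable_pt_lim (fun s => g (u s)) t (g (u' t)).
Proof.
  intros Hadd Hscal Hopp Hb H Ht eps He.
  destruct (H t Ht (eps / 2) ltac:(lra)) as [d [Hd Hh]].
  assert (Hpos : 0 < Rmin d (Rmin (t + T) (T - t))) by (repeat apply Rmin_pos; lra).
  exists (mkposreal _ Hpos). intros h Hh0 Hhl. simpl in Hhl.
  pose proof (Rmin_l d (Rmin (t + T) (T - t))). pose proof (Rmin_r d (Rmin (t + T) (T - t))).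
  pose proof (Rmin_l (t + T) (T - t)). pose proof (Rmin_r (t + T) (T - t)).
  pose proof (Rle_abs h). pose proof (Rabs_maj2 h).
  specialize (Hh h Hh0 ltac:(lra) ltac:(split; lra)).
  apply (Rle_lt_trans _ (eps / 2)); [|lra].
  eapply Rle_trans; [|apply Hh]. eapply Rle_trans; [|apply Hb]. right. f_equal.
  unfold Cminus. rewrite Hadd, Hopp, Hscal, Hadd, Hopp. unfold Rdiv. ring.
Qed.

Lemma Rabs_Re_le z : Rabs (fst z) <= Cmod z.
Proof. pose proof (Rmax_Cmod z). pose proof (Rmax_l (Rabs (fst z)) (Rabs (snd z))). lra. Qed.

Lemma Rabs_Im_le z : Rabs (snd z) <= Cmod z.
Proof. pose proof (Rmax_Cmod z). pose proof (Rmax_r (Rabs (fst z)) (Rabs (snd z))). lra. Qed.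

Lemma derivable_pt_lim_Re T u u' t : derivative_on T u u' -> -T < t < T ->
  derivable_pt_lim (fun s => fst (u s)) t (fst (u' t)).
Proof.
  intros. apply (derivable_pt_lim_comp_linear T u u' t (fun z => fst z));
    [intros [] []; simpl; ring | intros r []; simpl; ring | intros []; simpl; ring | apply Rabs_Re_le | auto | auto].
Qed.

Lemma derivable_pt_lim_Im T u u' t : derivative_on T u u' -> -T < t < T ->
  derivable_pt_lim (fun s => snd (u s)) t (snd (u' t)).
Proof.
  intros. apply (derivable_pt_lim_comp_linear T u u' t (fun z => snd z));
    [intros [] []; simpl; ring | intros r []; simpl; ring | intros []; simpl; ring | apply Rabs_Im_le | auto | auto].
Qed.

Lemma MVT_Rabs_le (f f' : R -> R) a b K : a <= b ->
  (forall c, a <= c <= b -> derivable_pt_lim f c (f' c)) -> (forall c, a <= c <= b -> Rabs (f' c) <= K) ->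
  Rabs (f b - f a) <= K * (b - a).
Proof.
  intros Hab Hd Hk. destruct (Req_dec a b) as [<-|Hne].
  - replace (f a - f a) with 0 by ring. rewrite Rabs_R0. specialize (Hk a ltac:(lra)).
    pose proof (Rabs_pos (f' a)). lra.
  - destruct (MVT_cor2 f f' a b ltac:(lra) Hd) as [c [Hc1 Hc2]]. rewrite Hc1.
    rewrite Rabs_mult, (Rabs_pos_eq (b - a)) by lra. specialize (Hk c ltac:(lra)).
    apply Rmult_le_compat_r; lra.
Qed.

Lemma Cmod_le_Re_Im z M : Rabs (fst z) <= M -> Rabs (snd z) <= M -> Cmod z <= 2 * M.
Proof.
  intros H1 H2. eapply Rle_trans; [apply Cmod_2Rmax|].
  assert (Rmax (Rabs (fst z)) (Rabs (snd z)) <= M) by (apply Rmax_lub; auto).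
  pose proof (Rmax_l (Rabs (fst z)) (Rabs (snd z))). pose proof (Rabs_pos (fst z)).
  assert (sqrt 2 <= 2) by (pose proof (sqrt_sqrt 2 ltac:(lra)); pose proof (sqrt_pos 2); nra).
  pose proof (sqrt_pos 2). nra.
Qed.

Lemma Cmod_increment_le_ordered T u u' s1 s2 K : derivative_on T u u' -> -T < s1 -> s1 <= s2 -> s2 < T ->
  (forall r, s1 <= r <= s2 -> Cmod (u' r) <= K) ->
  Cmod (Cminus (u s2) (u s1)) <= 2 * (K * (s2 - s1)).
Proof.
  intros Hd H1 H12 H2 Hb.
  apply Cmod_le_Re_Im; simpl; fold (Rminus (fst (u s2)) (fst (u s1))); fold (Rminus (snd (u s2)) (snd (u s1))).
  - apply (MVT_Rabs_le (fun s => fst (u s)) (fun s => fst (u' s))); [lra | |].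
    + intros c Hc. apply (derivable_pt_lim_Re T); auto; lra.
    + intros c Hc. eapply Rle_trans; [apply Rabs_Re_le | auto].
  - apply (MVT_Rabs_le (fun s => snd (u s)) (fun s => snd (u' s))); [lra | |].
    + intros c Hc. apply (derivable_pt_lim_Im T); auto; lra.
    + intros c Hc. eapply Rle_trans; [apply Rabs_Im_le | auto].
Qed.

Lemma Cmod_minus_sym x y : Cmod (Cminus x y) = Cmod (Cminus y x).
Proof. replace (Cminus x y) with (Copp (Cminus y x)) by ring. apply Cmod_opp. Qed.

Lemma Cmod_increment_le T u u' lo hi s1 s2 K : derivative_on T u u' -> -T < lo -> hi < T ->
  lo <= s1 <= hi -> lo <= s2 <= hi -> (forall r, lo <= r <= hi -> Cmod (u' r) <= K) ->
  Cmod (Cminus (u s2) (u s1)) <= 2 * (K * Rabs (s2 - s1)).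
Proof.
  intros Hd Hlo Hhi Hs1 Hs2 Hb. destruct (Rle_dec s1 s2).
  - rewrite Rabs_pos_eq by lra.
    apply (Cmod_increment_le_ordered T u u'); [auto | lra | lra | lra | intros; apply Hb; lra].
  - rewrite Cmod_minus_sym, Rabs_minus_sym, Rabs_pos_eq by lra.
    apply (Cmod_increment_le_ordered T u u'); [auto | lra | lra | lra | intros; apply Hb; lra].
Qed.

Lemma C1_linf_locally_bounded T u u' t0 : C1_linf T u u' -> -T < t0 < T ->
  exists rho B, 0 < rho /\ forall s, Rabs (s - t0) < rho -> -T < s < T /\ forall n, Cmod (u n s) <= B.
Proof.
  intros [Hb [Hd _]] Ht.
  destruct (Hb t0 Ht) as [[M0 HM0] [M1 HM1]]. cbv beta in HM0, HM1.
  destruct (Hd t0 Ht 1 ltac:(lra)) as [d [Hd0 Hh]].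
  pose proof (Rmin_l d (Rmin (t0 + T) (T - t0))). pose proof (Rmin_r d (Rmin (t0 + T) (T - t0))).
  pose proof (Rmin_l (t0 + T) (T - t0)). pose proof (Rmin_r (t0 + T) (T - t0)).
  assert (Hrho : 0 < Rmin d (Rmin (t0 + T) (T - t0))) by (repeat apply Rmin_pos; lra).
  set (rho := Rmin d (Rmin (t0 + T) (T - t0))) in *.
  assert (HM1p : 0 <= M1) by (pose proof (HM1 0%Z); pose proof (Cmod_ge_0 (u' 0%Z t0)); lra).
  exists rho, (M0 + rho * (M1 + 1)). split; auto. intros s Hs.
  pose proof (Rle_abs (s - t0)). pose proof (Rabs_maj2 (s - t0)).
  split; [lra|]. intros n. specialize (HM0 n).
  destruct (Req_dec (s - t0) 0) as [Hz0|Hz0]; [replace s with t0 by lra; nra |].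
  set (h := s - t0) in *. specialize (Hh h Hz0 ltac:(lra) ltac:(lra) n).
  replace (t0 + h) with s in Hh by (unfold h; ring).
  set (Q := Cmult (RtoC (/ h)) (Cminus (u n s) (u n t0))) in *.
  assert (HQ : Cmod Q <= M1 + 1).
  { replace Q with (Cplus (Cminus Q (u' n t0)) (u' n t0)) by ring.
    eapply Rle_trans; [apply Cmod_triangle|]. specialize (HM1 n). lra. }
  assert (Hus : u n s = Cplus (u n t0) (Cmult (RtoC h) Q)).
  { unfold Q. rewrite Cmult_assoc, <- RtoC_mult, Rinv_r by auto. ring. }
  rewrite Hus. eapply Rle_trans; [apply Cmod_triangle|].
  rewrite Cmod_mult, Cmod_R.
  assert (Rabs h * Cmod Q <= rho * (M1 + 1)) by (apply Rmult_le_compat; try lra; apply Rabs_pos || apply Cmod_ge_0).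
  lra.
Qed.

(** * The Ablowitz-Ladik field *)

Lemma Cmod_minus_le x y : Cmod (Cminus x y) <= Cmod x + Cmod y.
Proof. unfold Cminus. eapply Rle_trans; [apply Cmod_triangle|]. rewrite Cmod_opp. lra. Qed.

Lemma Cmod_mult3_le x y z B : 0 <= B -> Cmod y <= B -> Cmod z <= B ->
  Cmod (Cmult (Cmult x y) z) <= B * B * Cmod x.
Proof.
  intros HB Hy Hz. rewrite !Cmod_mult.
  pose proof (Cmod_ge_0 x). pose proof (Cmod_ge_0 y). pose proof (Cmod_ge_0 z).
  assert (Cmod y * Cmod z <= B * B) by (apply Rmult_le_compat; lra). nra.
Qed.

Lemma Cmod_trilinear_diff_le (ea eb em A0 B0 Bv Am : C) B : 0 <= B ->
  Cmod A0 <= B -> Cmod B0 <= B -> Cmod Bv <= B -> Cmod Am <= B ->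
  Cmod (Cplus (Cplus (Cmult (Cmult ea Bv) Am) (Cmult (Cmult A0 eb) Am)) (Cmult (Cmult A0 B0) em))
    <= B * B * (Cmod ea + Cmod eb + Cmod em).
Proof.
  intros HB H1 H2 H3 H4.
  eapply Rle_trans; [apply Cmod_triangle|].
  eapply Rle_trans; [apply Rplus_le_compat_r, Cmod_triangle|].
  pose proof (Cmod_mult3_le ea Bv Am B HB H3 H4).
  pose proof (Cmod_mult3_le eb A0 Am B HB H1 H4).
  pose proof (Cmod_mult3_le em A0 B0 B HB H1 H2).
  replace (Cmult (Cmult A0 eb) Am) with (Cmult (Cmult eb A0) Am) by ring.
  replace (Cmult (Cmult A0 B0) em) with (Cmult (Cmult em A0) B0) by ring.
  lra.
Qed.

(* Writing A = A0 + ea (and similarly for Bv, Am, Ap), the right-hand side splits into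
   the right-hand side at (A0, B0, A0m, A0p), which contributes the first three terms,
   plus terms linear in the deviations ea, eb, em, ep. *)
Lemma AL_field_le (A Bv Am Ap A0 B0 A0m A0p : C) B : 0 <= B ->
  Cmod A <= B -> Cmod Bv <= B -> Cmod Am <= B -> Cmod Ap <= B ->
  Cmod A0 <= B -> Cmod B0 <= B -> Cmod A0m <= B -> Cmod A0p <= B ->
  Cmod (Cminus (Cmult (Cminus (RtoC 1) (Cmult A Bv)) (Cplus Am Ap)) (Cmult (RtoC 2) A)) <=
  Cmod (Cminus A0m A0) + Cmod (Cminus A0p A0) + 2 * B * (Cmod A0 * Cmod B0) +
  (2 + 2 * (B * B)) * (Cmod (Cminus Am A0m) + Cmod (Cminus A A0) + Cmod (Cminus Ap A0p) + Cmod (Cminus Bv B0)).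
Proof.
  intros HB H1 H2 H3 H4 H5 H6 H7 H8.
  set (ea := Cminus A A0). set (eb := Cminus Bv B0). set (em := Cminus Am A0m). set (ep := Cminus Ap A0p).
  set (t1 := Cplus (Cminus A0m A0) (Cminus A0p A0)).
  set (t2 := Cminus (Cplus em ep) (Cmult (RtoC 2) ea)).
  set (t3 := Cplus (Cplus (Cmult (Cmult ea Bv) Am) (Cmult (Cmult A0 eb) Am)) (Cmult (Cmult A0 B0) em)).
  set (t4 := Cplus (Cplus (Cmult (Cmult ea Bv) Ap) (Cmult (Cmult A0 eb) Ap)) (Cmult (Cmult A0 B0) ep)).
  set (t5 := Cmult (Cmult A0 B0) (Cplus A0m A0p)).
  replace (Cminus (Cmult (Cminus (RtoC 1) (Cmult A Bv)) (Cplus Am Ap)) (Cmult (RtoC 2) A))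
    with (Cminus (Cminus (Cminus (Cplus t1 t2) t3) t4) t5)
    by (unfold t1, t2, t3, t4, t5, ea, eb, em, ep; ring).
  assert (Ht1 : Cmod t1 <= Cmod (Cminus A0m A0) + Cmod (Cminus A0p A0)) by apply Cmod_triangle.
  assert (Ht2 : Cmod t2 <= Cmod em + Cmod ep + 2 * Cmod ea).
  { eapply Rle_trans; [apply Cmod_minus_le|].
    rewrite Cmod_mult, Cmod_R, Rabs_pos_eq by lra. pose proof (Cmod_triangle em ep). lra. }
  assert (Ht3 : Cmod t3 <= B * B * (Cmod ea + Cmod eb + Cmod em)) by (apply Cmod_trilinear_diff_le; auto).
  assert (Ht4 : Cmod t4 <= B * B * (Cmod ea + Cmod eb + Cmod ep)) by (apply Cmod_trilinear_diff_le; auto).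
  assert (Ht5 : Cmod t5 <= 2 * B * (Cmod A0 * Cmod B0)).
  { unfold t5. rewrite !Cmod_mult. pose proof (Cmod_triangle A0m A0p).
    pose proof (Cmod_ge_0 A0). pose proof (Cmod_ge_0 B0). assert (0 <= Cmod A0 * Cmod B0) by nra. nra. }
  pose proof (Cmod_minus_le (Cminus (Cminus (Cplus t1 t2) t3) t4) t5).
  pose proof (Cmod_minus_le (Cminus (Cplus t1 t2) t3) t4).
  pose proof (Cmod_minus_le (Cplus t1 t2) t3).
  pose proof (Cmod_triangle t1 t2).
  pose proof (Cmod_ge_0 ea). pose proof (Cmod_ge_0 eb). pose proof (Cmod_ge_0 em). pose proof (Cmod_ge_0 ep).
  assert (0 <= B * B) by nra.
  nra.
Qed.

Lemma Cmod_solve_a (a' P a : C) :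
  Cplus (Cminus (Cmult (Copp Ci) a') P) (Cmult (RtoC 2) a) = RtoC 0 ->
  Cmod a' = Cmod (Cminus P (Cmult (RtoC 2) a)).
Proof.
  intros H. assert (E : Cmult (Copp Ci) a' = Cminus P (Cmult (RtoC 2) a)).
  { transitivity (Cplus (Cplus (Cminus (Cmult (Copp Ci) a') P) (Cmult (RtoC 2) a)) (Cminus P (Cmult (RtoC 2) a)));
      [ring | rewrite H; ring]. }
  rewrite <- E, Cmod_mult, Cmod_opp, Cmod_Ci. ring.
Qed.

Lemma Cmod_solve_b (b' P b : C) :
  Cminus (Cplus (Cmult (Copp Ci) b') P) (Cmult (RtoC 2) b) = RtoC 0 ->
  Cmod b' = Cmod (Cminus P (Cmult (RtoC 2) b)).
Proof.
  intros H. assert (E : Cmult (Copp Ci) b' = Copp (Cminus P (Cmult (RtoC 2) b))).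
  { transitivity (Cplus (Cminus (Cplus (Cmult (Copp Ci) b') P) (Cmult (RtoC 2) b)) (Copp (Cminus P (Cmult (RtoC 2) b))));
      [ring | rewrite H; ring]. }
  rewrite <- (Cmod_opp (Cminus P _)), <- E, Cmod_mult, Cmod_opp, Cmod_Ci. ring.
Qed.

(** * Propagation in time *)

Definition locally_invariant (T : R) (G : R -> Prop) : Prop :=
  forall t0, -T < t0 < T -> exists rho, 0 < rho /\
    forall s1 s, Rabs (s1 - t0) < rho -> Rabs (s - t0) < rho -> G s1 -> G s.

(* With sg the supremum of the u <= t such that G holds on [0, u], invariance near sg
   carries G up to min (sg + rho/2) t, so sg = t. *)
Lemma locally_invariant_nonneg T G t : locally_invariant T G -> G 0 -> 0 <= t < T -> G t.
Proof.
  intros HL H0 Ht.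
  set (E := fun u => 0 <= u <= t /\ forall s, 0 <= s <= u -> G s).
  assert (HE0 : E 0) by (split; [lra|]; intros s Hs; replace s with 0 by lra; auto).
  destruct (completeness E ltac:(exists t; intros u [Hu _]; lra) ltac:(exists 0; auto)) as [sg [Hub Hlub]].
  assert (Hsg0 : 0 <= sg) by (apply Hub; auto).
  assert (Hsgt : sg <= t) by (apply Hlub; intros u [Hu _]; lra).
  destruct (HL sg ltac:(lra)) as [rho [Hrho Hloc]].
  assert (Hu : exists u, E u /\ sg - rho < u).
  { apply NNPP. intros Hn. assert (sg <= sg - rho); [|lra].
    apply Hlub. intros u Hu. apply Rnot_lt_le. intros Hlt. apply Hn. exists u. auto. }
  destruct Hu as [u [[Hu1 Hu2] Hu3]].
  assert (Hus : u <= sg) by (apply Hub; split; auto).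
  assert (Hstar : E (Rmin (sg + rho / 2) t)).
  { pose proof (Rmin_l (sg + rho / 2) t). pose proof (Rmin_r (sg + rho / 2) t).
    split; [split; [apply Rmin_glb|]; lra|].
    intros s Hs. destruct (Rle_dec s u) as [Hsu|Hsu]; [apply Hu2; lra|].
    apply (Hloc u s); [apply Rabs_def1; lra | apply Rabs_def1; lra | apply Hu2; lra]. }
  pose proof (Hub _ Hstar) as Hle.
  destruct (Rle_dec (sg + rho / 2) t).
  - rewrite Rmin_left in Hle by lra. lra.
  - rewrite Rmin_right in Hstar by lra. apply (proj2 Hstar). lra.
Qed.

Lemma locally_invariant_interval T G t : locally_invariant T G -> G 0 -> -T < t < T -> G t.
Proof.
  intros HL H0 Ht. destruct (Rle_dec 0 t); [apply (locally_invariant_nonneg T); auto; lra|].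
  replace t with (- - t) by ring.
  apply (locally_invariant_nonneg T (fun s => G (- s))); [| rewrite Ropp_0; auto | lra].
  intros t0 Ht0. destruct (HL (- t0) ltac:(lra)) as [rho [Hr Hl]]. exists rho. split; auto.
  intros s1 s H1 H2. apply Hl.
  - replace (- s1 - - t0) with (- (s1 - t0)) by ring. rewrite Rabs_Ropp. auto.
  - replace (- s - - t0) with (- (s - t0)) by ring. rewrite Rabs_Ropp. auto.
Qed.

Lemma sup_on_interval (x : Z -> R -> R) lo hi B : lo <= hi ->
  (forall m s, lo <= s <= hi -> x m s <= B) ->
  exists y : Z -> R, (forall m s, lo <= s <= hi -> x m s <= y m) /\
    (forall m M, (forall s, lo <= s <= hi -> x m s <= M) -> y m <= M).
Proof.
  intros Hlh HB.
  set (E m r := exists s, lo <= s <= hi /\ r = x m s).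
  assert (Hbnd : forall m, bound (E m)) by (intros m; exists B; intros r [s [Hs ->]]; auto).
  assert (Hne : forall m, exists r, E m r) by (intros m; exists (x m lo), lo; split; [lra | auto]).
  exists (fun m => proj1_sig (completeness (E m) (Hbnd m) (Hne m))).
  split; intros m; destruct (proj2_sig (completeness (E m) (Hbnd m) (Hne m))) as [Hub Hlub].
  - intros s Hs. apply Hub. exists s. auto.
  - intros M HM. apply Hlub. intros r [s [Hs ->]]. auto.
Qed.

Definition AL_equations (a b a' b' : Z -> R -> C) (n : Z) (t : R) : Prop :=
  Cplus (Cminus (Cmult (Copp Ci) (a' n t))
                (Cmult (Cminus (RtoC 1) (Cmult (a n t) (b n t))) (Cplus (a (n - 1)%Z t) (a (n + 1)%Z t))))
        (Cmult (RtoC 2) (a n t)) = RtoC 0 /\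
  Cminus (Cplus (Cmult (Copp Ci) (b' n t))
                (Cmult (Cminus (RtoC 1) (Cmult (a n t) (b n t))) (Cplus (b (n - 1)%Z t) (b (n + 1)%Z t))))
         (Cmult (RtoC 2) (b n t)) = RtoC 0.

Definition dev (a b : Z -> R -> C) (a0 b0 : Z -> C) (t : R) (n : Z) : R :=
  Cmod (Cminus (a n t) (a0 n)) + Cmod (Cminus (b n t) (b0 n)).

Definition increment (a b : Z -> R -> C) (s1 s : R) (n : Z) : R :=
  Cmod (Cminus (a n s) (a n s1)) + Cmod (Cminus (b n s) (b n s1)).

(* The forcing term in the equation for the deviation from the static profile (a0, b0);
   B bounds the solution in sup norm. *)
Definition forcing (a0 b0 : Z -> C) (B : R) (n : Z) : R :=
  Cmod (Cminus (a0 (n - 1)%Z) (a0 n)) + Cmod (Cminus (a0 (n + 1)%Z) (a0 n)) +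
  Cmod (Cminus (b0 (n - 1)%Z) (b0 n)) + Cmod (Cminus (b0 (n + 1)%Z) (b0 n)) +
  2 * B * (Cmod (a0 n) * Cmod (b0 n)).

Lemma dev_ge0 a b a0 b0 t n : 0 <= dev a b a0 b0 t n.
Proof. unfold dev. pose proof (Cmod_ge_0 (Cminus (a n t) (a0 n))). pose proof (Cmod_ge_0 (Cminus (b n t) (b0 n))). lra. Qed.

Lemma increment_ge0 a b s1 s n : 0 <= increment a b s1 s n.
Proof. unfold increment. pose proof (Cmod_ge_0 (Cminus (a n s) (a n s1))). pose proof (Cmod_ge_0 (Cminus (b n s) (b n s1))). lra. Qed.

Lemma forcing_ge0 a0 b0 B n : 0 <= B -> 0 <= forcing a0 b0 B n.
Proof.
  intros HB. unfold forcing.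
  pose proof (Cmod_ge_0 (Cminus (a0 (n - 1)%Z) (a0 n))). pose proof (Cmod_ge_0 (Cminus (a0 (n + 1)%Z) (a0 n))).
  pose proof (Cmod_ge_0 (Cminus (b0 (n - 1)%Z) (b0 n))). pose proof (Cmod_ge_0 (Cminus (b0 (n + 1)%Z) (b0 n))).
  pose proof (Cmod_ge_0 (a0 n)). pose proof (Cmod_ge_0 (b0 n)).
  assert (0 <= Cmod (a0 n) * Cmod (b0 n)) by nra. nra.
Qed.

Lemma dev_le_increment a b a0 b0 s1 s n : dev a b a0 b0 s n <= dev a b a0 b0 s1 n + increment a b s1 s n.
Proof.
  unfold dev, increment.
  replace (Cminus (a n s) (a0 n)) with (Cplus (Cminus (a n s) (a n s1)) (Cminus (a n s1) (a0 n))) by ring.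
  replace (Cminus (b n s) (b0 n)) with (Cplus (Cminus (b n s) (b n s1)) (Cminus (b n s1) (b0 n))) by ring.
  pose proof (Cmod_triangle (Cminus (a n s) (a n s1)) (Cminus (a n s1) (a0 n))).
  pose proof (Cmod_triangle (Cminus (b n s) (b n s1)) (Cminus (b n s1) (b0 n))). lra.
Qed.

Lemma AL_deriv_le a b a' b' a0 b0 n t B : AL_equations a b a' b' n t -> 0 <= B ->
  (forall m, Cmod (a m t) <= B /\ Cmod (b m t) <= B) ->
  (forall m, Cmod (a0 m) <= B /\ Cmod (b0 m) <= B) ->
  let bound := forcing a0 b0 B n + (2 + 2 * (B * B)) *
      (dev a b a0 b0 t (n - 1)%Z + dev a b a0 b0 t n + dev a b a0 b0 t (n + 1)%Z) in
  Cmod (a' n t) <= bound /\ Cmod (b' n t) <= bound.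
Proof.
  intros [Ea Eb] HB Hb Hb0 bound. unfold bound, dev, forcing.
  destruct (Hb n), (Hb (n - 1)%Z), (Hb (n + 1)%Z), (Hb0 n), (Hb0 (n - 1)%Z), (Hb0 (n + 1)%Z).
  set (K := 2 + 2 * (B * B)). assert (0 <= K) by (unfold K; nra).
  pose proof (Cmod_ge_0 (Cminus (a (n - 1)%Z t) (a0 (n - 1)%Z))).
  pose proof (Cmod_ge_0 (Cminus (a (n + 1)%Z t) (a0 (n + 1)%Z))).
  pose proof (Cmod_ge_0 (Cminus (b (n - 1)%Z t) (b0 (n - 1)%Z))).
  pose proof (Cmod_ge_0 (Cminus (b (n + 1)%Z t) (b0 (n + 1)%Z))).
  pose proof (Cmod_ge_0 (Cminus (a0 (n - 1)%Z) (a0 n))). pose proof (Cmod_ge_0 (Cminus (a0 (n + 1)%Z) (a0 n))).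
  pose proof (Cmod_ge_0 (Cminus (b0 (n - 1)%Z) (b0 n))). pose proof (Cmod_ge_0 (Cminus (b0 (n + 1)%Z) (b0 n))).
  split.
  - rewrite (Cmod_solve_a _ _ _ Ea).
    eapply Rle_trans; [apply (AL_field_le _ _ _ _ (a0 n) (b0 n) (a0 (n - 1)%Z) (a0 (n + 1)%Z) B); auto|].
    fold K. nra.
  - rewrite (Cmod_solve_b _ _ _ Eb), (Cmult_comm (a n t) (b n t)).
    eapply Rle_trans; [apply (AL_field_le _ _ _ _ (b0 n) (a0 n) (b0 (n - 1)%Z) (b0 (n + 1)%Z) B); auto|].
    fold K. nra.
Qed.

Section ALDeviation.

Variables (T : R) (a b a' b' : Z -> R -> C) (a0 b0 : Z -> C).
Hypotheses (Ca : C1_linf T a a') (Cb : C1_linf T b b')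
  (Heq : forall n t, -T < t < T -> AL_equations a b a' b' n t).

Section ShortInterval.

Variables (lo hi s1 B : R).
Hypotheses (HB : 0 <= B) (Hlo : -T < lo) (Hhi : hi < T) (Hs1 : lo <= s1 <= hi)
  (Hbd : forall s, lo <= s <= hi -> forall m, Cmod (a m s) <= B /\ Cmod (b m s) <= B)
  (Hbd0 : forall m, Cmod (a0 m) <= B /\ Cmod (b0 m) <= B).

Let K := 2 + 2 * (B * B).
Let E := dev a b a0 b0 s1.

(* Mean value theorem plus [AL_deriv_le]; the factor 4 is 2 for the two components a, b
   times 2 from estimating real and imaginary parts separately. *)
Lemma sup_increment_three_point (y : Z -> R) :
  (forall m s, lo <= s <= hi -> increment a b s1 s m <= y m) ->
  (forall m M, (forall s, lo <= s <= hi -> increment a b s1 s m <= M) -> y m <= M) ->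
  three_point_le (4 * (hi - lo) * K) y
    (fun n => 4 * (hi - lo) * (forcing a0 b0 B n + K * (E (n - 1)%Z + E n + E (n + 1)%Z))).
Proof.
  intros Hub Hlub n. apply Hlub. intros s Hs.
  assert (Hy0 : forall m, 0 <= y m) by (intros m; eapply Rle_trans; [apply (increment_ge0 a b s1 s1 m) | auto]).
  set (Kn := forcing a0 b0 B n + K * ((E (n - 1)%Z + y (n - 1)%Z) + (E n + y n) + (E (n + 1)%Z + y (n + 1)%Z))).
  assert (HK : 0 <= K) by (unfold K; nra).
  assert (HKn : 0 <= Kn).
  { pose proof (forcing_ge0 a0 b0 B n HB). pose proof (Hy0 n). pose proof (Hy0 (n - 1)%Z). pose proof (Hy0 (n + 1)%Z).
    pose proof (dev_ge0 a b a0 b0 s1 n). pose proof (dev_ge0 a b a0 b0 s1 (n - 1)%Z).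
    pose proof (dev_ge0 a b a0 b0 s1 (n + 1)%Z). unfold Kn, E. nra. }
  assert (Hder : forall r, lo <= r <= hi -> Cmod (a' n r) <= Kn /\ Cmod (b' n r) <= Kn).
  { intros r Hr.
    destruct (AL_deriv_le a b a' b' a0 b0 n r B (Heq n r ltac:(lra)) HB (Hbd r Hr) Hbd0) as [D1 D2].
    assert (Hdev : forall m, dev a b a0 b0 r m <= E m + y m).
    { intros m. eapply Rle_trans; [apply (dev_le_increment _ _ _ _ s1)|]. unfold E. pose proof (Hub m r Hr). lra. }
    pose proof (Hdev (n - 1)%Z). pose proof (Hdev n). pose proof (Hdev (n + 1)%Z).
    assert (K * (dev a b a0 b0 r (n - 1)%Z + dev a b a0 b0 r n + dev a b a0 b0 r (n + 1)%Z) <=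
            K * ((E (n - 1)%Z + y (n - 1)%Z) + (E n + y n) + (E (n + 1)%Z + y (n + 1)%Z)))
      by (apply Rmult_le_compat_l; lra).
    unfold Kn. fold K in D1, D2. split; lra. }
  pose proof (Cmod_increment_le T (a n) (a' n) lo hi s1 s Kn (C1_linf_derivative_on T a a' n Ca) Hlo Hhi Hs1 Hs
                (fun r Hr => proj1 (Hder r Hr))).
  pose proof (Cmod_increment_le T (b n) (b' n) lo hi s1 s Kn (C1_linf_derivative_on T b b' n Cb) Hlo Hhi Hs1 Hs
                (fun r Hr => proj2 (Hder r Hr))).
  assert (Kn * Rabs (s - s1) <= Kn * (hi - lo)) by (apply Rmult_le_compat_l; auto; apply Rabs_le; lra).
  replace (4 * (hi - lo) * (forcing a0 b0 B n + K * (E (n - 1)%Z + E n + E (n + 1)%Z)) +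
           4 * (hi - lo) * K * (y (n - 1)%Z + y n + y (n + 1)%Z)) with (4 * (hi - lo) * Kn) by (unfold Kn; ring).
  unfold increment. nra.
Qed.

Lemma dev_wfinite_short_interval V c p e0 :
  moderate_weight V c -> Rbar_le 1 p -> absorbs_three_point V p e0 ->
  4 * (hi - lo) * K <= e0 ->
  wfinite V p (forcing a0 b0 B) -> wfinite V p E ->
  forall s, lo <= s <= hi -> wfinite V p (dev a b a0 b0 s).
Proof.
  intros Hw Hp Habs Hlen Hforce HE. pose proof Hw as (Hv & _).
  assert (Hv' : forall n, 0 <= V n) by (intros n; left; auto).
  assert (HE0 : forall n, 0 <= E n) by (intros; apply dev_ge0).
  assert (HK : 0 <= K) by (unfold K; nra).
  assert (HxB : forall m s, lo <= s <= hi -> increment a b s1 s m <= 4 * B).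
  { intros m s Hs. unfold increment. pose proof (Cmod_minus_le (a m s) (a m s1)).
    pose proof (Cmod_minus_le (b m s) (b m s1)). destruct (Hbd s Hs m), (Hbd s1 Hs1 m). lra. }
  destruct (sup_on_interval (fun m s => increment a b s1 s m) lo hi (4 * B) ltac:(lra) HxB) as [y [Hub Hlub]].
  assert (Hy0 : forall m, 0 <= y m) by (intros m; eapply Rle_trans; [apply (increment_ge0 a b s1 s1 m) | auto]).
  assert (Hy : wfinite V p y).
  { apply (Habs (4 * (hi - lo) * K) y
      (fun n => 4 * (hi - lo) * (forcing a0 b0 B n + K * (E (n - 1)%Z + E n + E (n + 1)%Z)))); auto.
    - split; [nra | lra].
    - intros n. pose proof (forcing_ge0 a0 b0 B n HB).
      pose proof (HE0 n). pose proof (HE0 (n - 1)%Z). pose proof (HE0 (n + 1)%Z).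
      apply Rmult_le_pos; [lra | nra].
    - exists (4 * B). intros m. apply Hlub. auto.
    - apply (wfiniteZ V p Hp); [lra | |].
      { intros n. pose proof (forcing_ge0 a0 b0 B n HB).
        pose proof (HE0 n). pose proof (HE0 (n - 1)%Z). pose proof (HE0 (n + 1)%Z). nra. }
      apply (wfiniteD V p Hv' Hp); auto.
      + intros n. apply forcing_ge0; auto.
      + intros n. pose proof (HE0 n). pose proof (HE0 (n - 1)%Z). pose proof (HE0 (n + 1)%Z). nra.
      + apply (wfiniteZ V p Hp); auto.
        * intros n. pose proof (HE0 n). pose proof (HE0 (n - 1)%Z). pose proof (HE0 (n + 1)%Z). lra.
        * apply (wfinite_three_point_sum V c p Hw Hp); auto.
    - apply sup_increment_three_point; auto. }
  intros s Hs. apply (wfinite_le V p Hv' Hp _ (fun n => E n + y n)).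
  - intros n. split; [apply dev_ge0 | eapply Rle_trans; [apply (dev_le_increment _ _ _ _ s1)|]].
    fold E. pose proof (Hub n s Hs). lra.
  - apply wfiniteD; auto.
Qed.

End ShortInterval.

Lemma dev_wfinite_locally_invariant V c p : moderate_weight V c -> Rbar_le 1 p ->
  bounded_seq a0 -> bounded_seq b0 -> (forall B, 0 <= B -> wfinite V p (forcing a0 b0 B)) ->
  locally_invariant T (fun s => wfinite V p (dev a b a0 b0 s)).
Proof.
  intros Hw Hp [Ma HMa] [Mb HMb] Hforce t0 Ht0.
  destruct (absorbs_three_point_exists V c Hw p Hp) as [e0 [He0 Habs]].
  destruct (C1_linf_locally_bounded T a a' t0 Ca Ht0) as [ra [Ba [Hra HBa]]].
  destruct (C1_linf_locally_bounded T b b' t0 Cb Ht0) as [rb [Bb [Hrb HBb]]].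
  set (B := Rabs Ba + Rabs Bb + Rabs Ma + Rabs Mb).
  assert (HBs : 0 <= B /\ Ba <= B /\ Bb <= B /\ Ma <= B /\ Mb <= B).
  { unfold B. pose proof (Rle_abs Ba). pose proof (Rle_abs Bb). pose proof (Rle_abs Ma). pose proof (Rle_abs Mb).
    pose proof (Rabs_pos Ba). pose proof (Rabs_pos Bb). pose proof (Rabs_pos Ma). pose proof (Rabs_pos Mb). lra. }
  set (K := 2 + 2 * (B * B)). assert (HK : 2 <= K) by (unfold K; nra).
  assert (Hrho : 0 < Rmin (Rmin ra rb) (e0 / (8 * K))).
  { repeat apply Rmin_pos; auto. apply Rdiv_lt_0_compat; lra. }
  pose proof (Rmin_l (Rmin ra rb) (e0 / (8 * K))). pose proof (Rmin_r (Rmin ra rb) (e0 / (8 * K))).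
  pose proof (Rmin_l ra rb). pose proof (Rmin_r ra rb).
  set (rho := Rmin (Rmin ra rb) (e0 / (8 * K))) in *.
  exists rho. split; auto. intros s1 s Hs1 Hs HX.
  apply Rabs_def2 in Hs1. apply Rabs_def2 in Hs.
  assert (Hin : forall r, Rmin s1 s <= r <= Rmax s1 s -> Rabs (r - t0) < ra /\ Rabs (r - t0) < rb).
  { intros r Hr. unfold Rmin, Rmax in Hr. destruct (Rle_dec s1 s); split; apply Rabs_def1; lra. }
  assert (Hmm : Rmin s1 s <= s1 <= Rmax s1 s /\ Rmin s1 s <= s <= Rmax s1 s /\ Rmax s1 s - Rmin s1 s < 2 * rho).
  { unfold Rmin, Rmax. destruct (Rle_dec s1 s); lra. }
  destruct (HBa (Rmin s1 s) (proj1 (Hin (Rmin s1 s) ltac:(lra)))) as [[HTlo _] _].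
  destruct (HBa (Rmax s1 s) (proj1 (Hin (Rmax s1 s) ltac:(lra)))) as [[_ HThi] _].
  apply (dev_wfinite_short_interval (Rmin s1 s) (Rmax s1 s) s1 B) with (c := c) (e0 := e0); try tauto.
  - intros r Hr m. destruct (Hin r Hr) as [Ia Ib].
    specialize (proj2 (HBa r Ia) m). specialize (proj2 (HBb r Ib) m). lra.
  - intros m. specialize (HMa m). specialize (HMb m). cbv beta in *. lra.
  - assert (8 * rho * K <= e0).
    { apply (Rmult_le_compat_r (8 * K)) in H0; [|lra].
      unfold Rdiv in H0. rewrite Rmult_assoc, Rinv_l in H0 by lra. lra. }
    fold K. nra.
  - apply Hforce. tauto.
Qed.

End ALDeviation.

Lemma forcing_wfinite V c p a0 b0 : moderate_weight V c -> Rbar_le 1 p ->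
  wnorm_finite V p (fun n => Cminus (a0 n) (shiftp a0 n)) (fun n => Cminus (b0 n) (shiftp b0 n)) ->
  wfinite V p (fun n => Cmod (a0 n) * Cmod (b0 n)) ->
  forall B, 0 <= B -> wfinite V p (forcing a0 b0 B).
Proof.
  intros Hw Hp Hdiff Hprod B HB. pose proof Hw as (Hv & _).
  assert (Hv' : forall n, 0 <= V n) by (intros n; left; auto).
  destruct (wfinite_of_wnorm_finite V p _ _ Hv' Hp Hdiff) as [LA LB].
  assert (Hshift : forall u : Z -> C, wfinite V p (fun n => Cmod (Cminus (u n) (shiftp u n))) ->
            wfinite V p (fun n => Cmod (Cminus (u (n - 1)%Z) (u n)) + Cmod (Cminus (u (n + 1)%Z) (u n)))).
  { intros u Hu. apply (wfiniteD V p Hv' Hp); try (intros; apply Cmod_ge_0).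
    - apply (wfinite_ext V p Hp _ (fun n => Cmod (Cminus (u (n - 1)%Z) (shiftp u (n - 1)%Z)))).
      + intros n. unfold shiftp. replace (n - 1 + 1)%Z with n by lia. auto.
      + apply (wfinite_shiftm V c p Hw Hp (fun n => Cmod (Cminus (u n) (shiftp u n)))); auto.
        intros; apply Cmod_ge_0.
    - apply (wfinite_ext V p Hp _ _ (fun n => Cmod_minus_sym _ _)). exact Hu. }
  unfold forcing. apply (wfiniteD V p Hv' Hp).
  - intros n. pose proof (Cmod_ge_0 (Cminus (a0 (n - 1)%Z) (a0 n))). pose proof (Cmod_ge_0 (Cminus (a0 (n + 1)%Z) (a0 n))).
    pose proof (Cmod_ge_0 (Cminus (b0 (n - 1)%Z) (b0 n))). pose proof (Cmod_ge_0 (Cminus (b0 (n + 1)%Z) (b0 n))). lra.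
  - intros n. pose proof (Cmod_ge_0 (a0 n)). pose proof (Cmod_ge_0 (b0 n)).
    apply Rmult_le_pos; [lra | nra].
  - apply (wfinite_ext V p Hp _ (fun n => (Cmod (Cminus (a0 (n - 1)%Z) (a0 n)) + Cmod (Cminus (a0 (n + 1)%Z) (a0 n))) +
                                         (Cmod (Cminus (b0 (n - 1)%Z) (b0 n)) + Cmod (Cminus (b0 (n + 1)%Z) (b0 n))))).
    { intros n. ring. }
    apply (wfiniteD V p Hv' Hp); auto; intros n; pose proof (Cmod_ge_0 (Cminus (a0 (n - 1)%Z) (a0 n)));
      pose proof (Cmod_ge_0 (Cminus (a0 (n + 1)%Z) (a0 n))); pose proof (Cmod_ge_0 (Cminus (b0 (n - 1)%Z) (b0 n)));
      pose proof (Cmod_ge_0 (Cminus (b0 (n + 1)%Z) (b0 n))); lra.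
  - apply (wfiniteZ V p Hp); [lra | | auto]. intros n. apply Rmult_le_pos; apply Cmod_ge_0.
Qed.

Lemma wfinite_Cmod_mult_fin w q a0 b0 : (forall n, 0 <= w n) -> 1 <= q ->
  wnorm_finite w (Finite (2 * q)) a0 b0 -> wfinite w (Finite q) (fun n => Cmod (a0 n) * Cmod (b0 n)).
Proof.
  intros Hw Hq H. simpl in *. apply summableZ_wsum in H.
  2:{ intros n. pose proof (rpow_ge0 (Cmod (a0 n)) (2 * q)). pose proof (rpow_ge0 (Cmod (b0 n)) (2 * q)).
      apply Rmult_le_pos; auto; lra. }
  destruct H as [M HM]. exists M. intros N. eapply Rle_trans; [|apply (HM N)]. apply zsum_le. intros n.
  apply Rmult_le_compat_l; auto.
  set (x := Cmod (a0 n)). set (y := Cmod (b0 n)).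
  assert (Hx : 0 <= x) by apply Cmod_ge_0. assert (Hy : 0 <= y) by apply Cmod_ge_0.
  pose proof (Rmax_l x y). pose proof (Rmax_r x y).
  assert (rpow (x * y) q <= rpow (Rmax x y * Rmax x y) q)
    by (apply rpow_le_compat; [lra | split; [nra | apply Rmult_le_compat; lra]]).
  rewrite rpow_sqr in H1 by lra.
  assert (rpow (Rmax x y) (2 * q) <= rpow x (2 * q) + rpow y (2 * q)).
  { unfold Rmax. destruct (Rle_dec x y); pose proof (rpow_ge0 x (2 * q)); pose proof (rpow_ge0 y (2 * q)); lra. }
  lra.
Qed.

Lemma wfinite_Cmod_mult_inf w a0 b0 : (forall n, 0 <= w n) ->
  wnorm_finite w p_infty a0 b0 -> wfinite (fun n => w n ^ 2) p_infty (fun n => Cmod (a0 n) * Cmod (b0 n)).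
Proof.
  intros Hw [M HM]. exists (M * M). intros n. specialize (HM n). specialize (Hw n).
  pose proof (Cmod_ge_0 (a0 n)). pose proof (Cmod_ge_0 (b0 n)).
  assert (w n * Cmod (a0 n) * (w n * Cmod (b0 n)) <= M * M) by (apply Rmult_le_compat; nra).
  nra.
Qed.

Lemma AL_deviation_wnorm_finite V c p T a b a0 b0 ta0 tb0 :
  moderate_weight V c -> Rbar_le 1 p -> bounded_seq a0 -> bounded_seq b0 ->
  wnorm_finite V p (fun n => Cminus (a0 n) (shiftp a0 n)) (fun n => Cminus (b0 n) (shiftp b0 n)) ->
  wfinite V p (fun n => Cmod (a0 n) * Cmod (b0 n)) ->
  wnorm_finite V p ta0 tb0 ->
  AL_solution T a b ->
  (forall n, a n 0 = Cplus (a0 n) (ta0 n)) -> (forall n, b n 0 = Cplus (b0 n) (tb0 n)) ->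
  forall t, -T < t < T ->
    wnorm_finite V p (fun n => Cminus (a n t) (a0 n)) (fun n => Cminus (b n t) (b0 n)).
Proof.
  intros Hw Hp Ha0 Hb0 Hdiff Hprod Hpert (a' & b' & Ca & Cb & Heq) Hinit_a Hinit_b t Ht.
  pose proof Hw as (Hv & _). assert (Hv' : forall n, 0 <= V n) by (intros n; left; auto).
  apply wnorm_finite_of_wfinite; auto. change (wfinite V p (dev a b a0 b0 t)).
  apply (locally_invariant_interval T (fun s => wfinite V p (dev a b a0 b0 s))); auto.
  - apply (dev_wfinite_locally_invariant T a b a' b' a0 b0 Ca Cb Heq V c p); auto.
    apply (forcing_wfinite V c p); auto.
  - destruct (wfinite_of_wnorm_finite V p ta0 tb0 Hv' Hp Hpert) as [Ha Hb].
    apply (wfinite_ext V p Hp _ (fun n => Cmod (ta0 n) + Cmod (tb0 n))).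
    + intros n. unfold dev. rewrite Hinit_a, Hinit_b. f_equal; f_equal; ring.
    + apply wfiniteD; auto; intros; apply Cmod_ge_0.
Qed.

Theorem theorem2p4
  (w : Z -> R)
  (Hw1 : forall n, 1 <= w n)
  (Hwq : exists M : R, forall n,
           Rabs (w (n + 1)%Z / w n) + Rabs (w n / w (n + 1)%Z) <= M)
  (p : Rbar) (Hp : Rbar_le (Finite 1) p)
  (a0 b0 ta0 tb0 : Z -> C)
  (Hba0 : bounded_seq a0) (Hbb0 : bounded_seq b0)
  (Hbta0 : bounded_seq ta0) (Hbtb0 : bounded_seq tb0)
  (Hdata : match p with
           | Finite q =>
               wnorm_finite w (Finite (2 * q)) a0 b0 /\
               wnorm_finite w p (fun n => Cminus (a0 n) (shiftp a0 n))
                                (fun n => Cminus (b0 n) (shiftp b0 n)) /\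
               wnorm_finite w p ta0 tb0
           | _ =>
               wnorm_finite w p_infty a0 b0 /\
               wnorm_finite (fun n => w n ^ 2) p_infty
                 (fun n => Cminus (a0 n) (shiftp a0 n))
                 (fun n => Cminus (b0 n) (shiftp b0 n)) /\
               wnorm_finite (fun n => w n ^ 2) p_infty ta0 tb0
           end)
  (T : R) (HT : 0 < T)
  (a b : Z -> R -> C)
  (Hsol : AL_solution T a b)
  (Ha0 : forall n, a n 0 = Cplus (a0 n) (ta0 n))
  (Hb0 : forall n, b n 0 = Cplus (b0 n) (tb0 n)) :
  forall t, -T < t < T ->
    match p with
    | Finite q => wnorm_finite w p (fun n => Cminus (a n t) (a0 n))
                                   (fun n => Cminus (b n t) (b0 n))
    | _ => wnorm_finite (fun n => w n ^ 2) p_infty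
             (fun n => Cminus (a n t) (a0 n)) (fun n => Cminus (b n t) (b0 n))
    end.
Proof.
  destruct (moderate_weight_of_ratio_bound w Hw1 Hwq) as [c Hc].
  assert (Hw0 : forall n, 0 <= w n) by (intros n; specialize (Hw1 n); lra).
  destruct p as [q| |]; [| | destruct Hp]; destruct Hdata as (Hprod & Hdiff & Hpert).
  - apply (AL_deviation_wnorm_finite w c (Finite q) T a b a0 b0 ta0 tb0); auto.
    apply wfinite_Cmod_mult_fin; auto.
  - apply (AL_deviation_wnorm_finite (fun n => w n ^ 2) (c ^ 2) p_infty T a b a0 b0 ta0 tb0); auto.
    + apply moderate_weight_sqr; auto.
    + apply wfinite_Cmod_mult_inf; auto.
Qed.
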